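(* Let $(F_S,\iota)$ be an embedded local étale algebra, $\Gamma\subseteq\mathrm{PGL}_2(F_S)$ a plectic subgroup, $S_1\subseteq S$, and $U\subseteq\mathrm{PGL}_2(F_{S\setminus S_1})$ an open compact subgroup. Then the subgroup $\Gamma_U=\mathrm{pr}_{S_1}\big(\Gamma\cap(\mathrm{PGL}_2(F_{S_1})\times U)\big)\subseteq\mathrm{PGL}_2(F_{S_1})$ is plectic and $\mathcal L_{\Gamma,\mathfrak p}=\mathcal L_{\Gamma_U,\mathfrak p}$ for all $\mathfrak p\in S_1$.
   Context: Fix a prime $p$ and let $\mathbf{C}$ be the completion of an algebraic closure of $\mathbb{Q}_p$ or of $\mathbb{F}_p((T))$. An embedded local étale algebra $(F_S,\iota)$ consists of a finite non-empty set $S$, non-Archimedean local fields $F_\mathfrak p$ ($\mathfrak p\in S$) of residue characteristic $p$ and of the same characteristic as $\mathbf C$, and embeddings $\iota_\mathfrak p\colon F_\mathfrak p\hookrightarrow\mathbf C$ (so $\mathbb P^1(F_\mathfrak p)\subseteq\mathbb P^1(\mathbf C)$). For $T\subseteq S$ put $F_T=\prod_{\mathfrak p\in T}F_\mathfrak p$, $\mathbb P^1(\mathbf C_T)=\prod_{\mathfrak p\in T}\mathbb P^1(\mathbf C)$; $\mathrm{PGL}_2(F_T)=\prod_{\mathfrak p\in T}\mathrm{PGL}_2(F_\mathfrak p)$ acts componentwise by Möbius transformations on $\mathbb P^1(\mathbf C_T)$; $\mathrm{PGL}_2(F_S)=\mathrm{PGL}_2(F_{S_1})\times\mathrm{PGL}_2(F_{S\setminus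 S_1})$ and $\mathrm{pr}_{S_1}$ is the projection. For a subgroup $\Gamma\subseteq\mathrm{PGL}_2(F_T)$, $\mathcal L^T_\Gamma$ is the set of $x\in\mathbb P^1(\mathbf C_T)$ such that $\gamma_j(y)\to x$ for some $y$ and pairwise distinct $\gamma_j\in\Gamma$. $\Gamma$ is plectic if there are subsets $\mathcal L_{\Gamma,\mathfrak p}\subseteq\mathbb P^1(F_\mathfrak p)$, $\mathfrak p\in T$, with $\mathcal L^T_\Gamma=\bigcup_{\mathfrak p\in T}\big(\mathcal L_{\Gamma,\mathfrak p}\times\prod_{\mathfrak q\in T\setminus\{\mathfrak p\}}\mathbb P^1(\mathbf C)\big)$. *)

From mathcomp Require Import all_boot all_order all_algebra.
From mathcomp Require Import reals.
Set Implicit Arguments. Unset Strict Implicit. Unset Printing Implicit Defensive.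
Import Order.TTheory GRing.Theory Num.Theory.
Local Open Scope ring_scope.

Section Valued.
Variables (R : realType) (C : fieldType) (abs : C -> R).

Definition is_nonarch_abs : Prop :=
  [/\ forall x, 0 <= abs x, forall x, abs x = 0 <-> x = 0,
      forall x y, abs (x * y) = abs x * abs y &
      forall x y, abs (x + y) <= Num.max (abs x) (abs y)].

Definition cvgC (u : nat -> C) (l : C) : Prop :=
  forall e : R, 0 < e -> exists N, forall n, (N <= n)%N -> abs (u n - l) < e.

Definition cauchyC (u : nat -> C) : Prop :=
  forall e : R, 0 < e -> exists N, forall m n, (N <= m)%N -> (N <= n)%N ->
    abs (u m - u n) < e.

Definition completeC : Prop := forall u, cauchyC u -> exists l, cvgC u l.

Definition alg_closedC : Prop :=
  forall P : {poly C}, (1 < size P)%N -> exists x, root P x.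

Definition is_subfield (F : C -> Prop) : Prop :=
  [/\ F 0, F 1, (forall x y, F x -> F y -> F (x - y)),
      (forall x y, F x -> F y -> F (x * y)) &
      (forall x, F x -> x != 0 -> F x^-1)].

Definition seq_compact_in (K : C -> Prop) : Prop :=
  forall u : nat -> C, (forall n, K (u n)) ->
    exists phi : nat -> nat, (forall n, (phi n < phi n.+1)%N) /\
      exists l, K l /\ cvgC (u \o phi) l.

(* A non-Archimedean local field embedded (continuously) in C, identified with its
   image: a non-discrete, locally compact subfield of C.  Its residue
   characteristic and characteristic are then those of C. *)
Definition embedded_local_field (F : C -> Prop) : Prop :=
  [/\ is_subfield F, (exists x, F x /\ 0 < abs x < 1) &
      exists r : R, 0 < r /\ seq_compact_in (fun x => F x /\ abs x <= r)].

Definition algebraic_over (K : C -> Prop) (x : C) : Prop :=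
  exists P : {poly C}, [/\ P != 0, (forall i, K P`_i) & root P x].

(* C is (isomorphic to) the completion of an algebraic closure of Q_p or of
   F_p((T)): a complete algebraically closed non-Archimedean field of residue
   characteristic p in which the algebraic closure of some local subfield K0
   (a finite extension of Q_p, resp. F_p((T))) is dense. *)
Definition is_C_field (p : nat) : Prop :=
  [/\ is_nonarch_abs, completeC, alg_closedC, abs (p%:R) < 1 &
      exists K0, embedded_local_field K0 /\
        forall x (e : R), 0 < e -> exists y, algebraic_over K0 y /\ abs (x - y) < e].

(* P^1(C) = C + {infinity}; None is the point at infinity *)
Definition P1 := option C.

Definition chordal (x y : P1) : R :=
  match x, y with
  | Some a, Some b => abs (a - b) / (Num.max 1 (abs a) * Num.max 1 (abs b))
  | Some a, None => (Num.max 1 (abs a))^-1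
  | None, Some a => (Num.max 1 (abs a))^-1
  | None, None => 0
  end.

Definition cvgP1 (u : nat -> P1) (l : P1) : Prop :=
  forall e : R, 0 < e -> exists N, forall n, (N <= n)%N -> chordal (u n) l < e.

Definition mob (a b c d : C) (z : P1) : P1 :=
  match z with
  | Some w => if c * w + d == 0 then None else Some ((a * w + b) / (c * w + d))
  | None => if c == 0 then None else Some (a / c)
  end.

Definition inP1 (F : C -> Prop) (z : P1) : Prop :=
  match z with Some w => F w | None => True end.

Definition lift_at (F : C -> Prop) (a b c d : C) (g : P1 -> P1) : Prop :=
  [/\ F a, F b, F c, F d & a * d - b * c != 0] /\ g = mob a b c d.

(* elements of PGL_2(F), identified with the Moebius transformations of P^1(C)
   they induce (the action is faithful) *)
Definition is_PGL2 (F : C -> Prop) (g : P1 -> P1) : Prop :=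
  exists a b c d, lift_at F a b c d g.

Section Plectic.
Variables (S : finType) (F : S -> C -> Prop).

(* an element of PGL_2(F_T), T a subset of S, is a family indexed by S which is
   the identity outside T *)
Definition elt := S -> P1 -> P1.

Definition in_PGL2 (T : {set S}) (g : elt) : Prop :=
  (forall q, q \in T -> is_PGL2 (F q) (g q)) /\ (forall q, q \notin T -> g q = id).

Definition is_subgroup (T : {set S}) (G : elt -> Prop) : Prop :=
  [/\ (forall g, G g -> in_PGL2 T g), G (fun _ => id),
      (forall g h, G g -> G h -> G (fun q => g q \o h q)) &
      (forall g, G g -> exists h, G h /\ forall q, h q \o g q = id /\ g q \o h q = id)].

(* points of P^1(C_T) are families x : S -> P1 whose coordinates outside T are
   ignored *)
Definition limset (T : {set S}) (G : elt -> Prop) (x : S -> P1) : Prop :=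
  exists (y : S -> P1) (gam : nat -> elt),
    [/\ forall j, G (gam j), injective gam &
        forall q, q \in T -> cvgP1 (fun j => gam j q (y q)) (x q)].

Definition plectic_wit (T : {set S}) (G : elt -> Prop) (L : S -> P1 -> Prop) : Prop :=
  (forall q, q \in T -> forall z, L q z -> inP1 (F q) z) /\
  (forall x, limset T G x <-> exists2 q, q \in T & L q (x q)).

Definition plectic (T : {set S}) (G : elt -> Prop) : Prop :=
  is_subgroup T G /\ exists L, plectic_wit T G L.

(* topology of PGL_2(F_T) (quotient of GL_2), via convergent sequences *)
Definition cvg_PGL2 (T : {set S}) (g : nat -> elt) (g0 : elt) : Prop :=
  forall q, q \in T -> exists (a b c d : nat -> C) (a0 b0 c0 d0 : C),
    [/\ forall n, lift_at (F q) (a n) (b n) (c n) (d n) (g n q),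
        lift_at (F q) a0 b0 c0 d0 (g0 q) &
        [/\ cvgC a a0, cvgC b b0, cvgC c c0 & cvgC d d0]].

Definition open_in_PGL2 (T : {set S}) (U : elt -> Prop) : Prop :=
  forall g0, U g0 -> forall g : nat -> elt, (forall n, in_PGL2 T (g n)) ->
    cvg_PGL2 T g g0 -> exists N, forall n, (N <= n)%N -> U (g n).

Definition compact_in_PGL2 (T : {set S}) (U : elt -> Prop) : Prop :=
  forall g : nat -> elt, (forall n, U (g n)) ->
    exists phi : nat -> nat, (forall n, (phi n < phi n.+1)%N) /\
      exists2 g0, U g0 & cvg_PGL2 T (g \o phi) g0.

Definition open_compact_subgroup (T : {set S}) (U : elt -> Prop) : Prop :=
  [/\ is_subgroup T U, open_in_PGL2 T U & compact_in_PGL2 T U].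

Definition prS (T : {set S}) (g : elt) : elt :=
  fun q => if q \in T then g q else id.

Definition GammaU (S1 : {set S}) (G U : elt -> Prop) : elt -> Prop :=
  fun h => exists g, [/\ G g, U (prS (~: S1) g) & h = prS S1 g].

End Plectic.
End Valued.

(* Fix points out_q of C outside F_q (they exist as C is algebraically closed); they lie
   in no L_{Gamma,q}. A limit point of Gamma_U, completed by the out_q off S1, is a limit
   point of Gamma, because U is compact. Conversely, if a limit point of Gamma is out_q
   off S1, the approaching elements converge off S1 along a subsequence, so the quotients
   gamma_j gamma_k^-1 eventually lie in the open subgroup U, and their S1-components are
   elements of Gamma_U approaching the given point on S1. *)

From mathcomp Require Import all_boot all_order all_algebra.
From mathcomp Require Import reals boolp.
From mathcomp Require Import ring lra.
Set Implicit Arguments. Unset Strict Implicit. Unset Printing Implicit Defensive.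
Import Order.TTheory GRing.Theory Num.Theory.
Local Open Scope ring_scope.

Lemma comp_id_apply (T : Type) (f g : T -> T) z : f \o g = id -> f (g z) = z.
Proof. by move=> fg; rewrite -[RHS]/(id z) -fg. Qed.

Lemma comp_id_inj (T : Type) (f g h : T -> T) : g \o f = id -> f \o h = id -> g = h.
Proof. by move=> gf fh; apply: funext => z; rewrite -{1}(comp_id_apply z fh) comp_id_apply. Qed.

Lemma choice4 (T : Type) (P : nat -> T -> T -> T -> T -> Prop) :
  (forall n, exists a b c d, P n a b c d) ->
  exists a b c d : nat -> T, forall n, P n (a n) (b n) (c n) (d n).
Proof.
move=> ex; pose Q n (t : T * T * T * T) := P n t.1.1.1 t.1.1.2 t.1.2 t.2.
have [t Qt] : {t : nat -> T * T * T * T & forall n, Q n (t n)}.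
  by apply: choice => n; have [a [b [c [d Pn]]]] := ex n; exists (a, b, c, d).
by exists (fun n => (t n).1.1.1), (fun n => (t n).1.1.2), (fun n => (t n).1.2), (fun n => (t n).2).
Qed.

Definition increasing (phi : nat -> nat) := forall n, (phi n < phi n.+1)%N.

Section Increasing.
Variable phi : nat -> nat.
Hypothesis phi_incr : increasing phi.

Lemma increasing_lt : {homo phi : m n / (m < n)%N}.
Proof. exact: homo_ltn ltn_trans phi_incr. Qed.

Lemma increasing_inj : injective phi.
Proof. exact/incn_inj/leq_mono/increasing_lt. Qed.

Lemma increasing_ge n : (n <= phi n)%N.
Proof. by elim: n => [//|n ih]; apply: leq_ltn_trans ih (phi_incr n). Qed.

Lemma increasing_comp psi : increasing psi -> increasing (phi \o psi).
Proof. by move=> psi_incr n; apply: increasing_lt. Qed.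

End Increasing.

Lemma increasing_subseq (P : nat -> Prop) :
  (forall N, exists j, (N <= j)%N /\ P j) -> exists2 phi, increasing phi & forall n, P (phi n).
Proof.
move=> often; have [next next_spec] := choice often.
pose phi := fix phi n := if n is n'.+1 then next (phi n').+1 else next 0%N.
exists phi => [n|[|n]]; [exact: (next_spec _).1 | exact: (next_spec _).2 ..].
Qed.

Lemma subseq_injective_or_constant (T : Type) (f : nat -> T) :
  (exists2 phi, increasing phi & injective (f \o phi)) \/
  (exists2 phi, increasing phi & forall n, f (phi n) = f (phi 0%N)).
Proof.
have [[v often_v]|rare] := EM (exists v, forall N, exists n, (N <= n)%N /\ f n = v).
  right; have [phi phi_incr fphi] := increasing_subseq often_v.
  by exists phi => // n; rewrite !fphi.
left.
have [B B_spec] : {B : T -> nat & forall v n, (B v <= n)%N -> f n <> v}.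
  apply: (@choice _ _ (fun v B => forall n, (B <= n)%N -> f n <> v)) => v.
  apply: contrapT => no_bound; apply: rare; exists v => N.
  apply: contrapT => none; apply: no_bound; exists N => n le_Nn fnv.
  by apply: none; exists n.
(* [st n] is the pair (a_n, b_n) of the n-th chosen index and a bound beyond which none
   of the values f a_0, ..., f a_n recurs. *)
pose st := fix st n := if n is n'.+1 then
    let a := maxn (st n').2 (st n').1.+1 in (a, maxn (st n').2 (B (f a)))
  else (0%N, B (f 0%N)).
have st_mono i j : (i <= j)%N -> ((st i).2 <= (st j).2)%N.
  move=> /subnKC <-; elim: (j - i)%N => [|k ih]; first by rewrite addn0.
  by rewrite addnS /=; apply: leq_trans ih (leq_maxl _ _).
have st_bound n : (B (f (st n).1) <= (st n).2)%N by case: n => [|n] //=; rewrite leq_maxr.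
have st_next n : ((st n).2 <= (st n.+1).1)%N /\ ((st n).1 < (st n.+1).1)%N.
  by rewrite /= leq_maxl leq_maxr.
have st_incr : increasing (fun n => (st n).1) by move=> n; case: (st_next n).
exists (fun n => (st n).1) => // i j /= fij.
wlog lt_ij : i j fij / (i < j)%N.
  by move=> wl; case: (ltngtP i j) => [/wl|/(wl j i (esym fij))|] ->.
case: j lt_ij fij => [//|j] lt_ij fij; exfalso; apply: (B_spec (f (st i).1) (st j.+1).1) => //.
apply: leq_trans (st_bound i) _; apply: leq_trans (st_mono i j _) (st_next j).1.
by rewrite -ltnS.
Qed.

Section Moebius.
Variable C : fieldType.

Definition homog (n m : C) : P1 C := if m == 0 then None else Some (n / m).

Lemma homogZ l n m : l != 0 -> homog (l * n) (l * m) = homog n m.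
Proof.
move=> l0; rewrite /homog mulf_eq0 (negbTE l0) /=.
by case: ifP => // /negbT m0; congr Some; field; apply/andP.
Qed.

Lemma homog_surj (z : P1 C) : exists n m, ((n != 0) || (m != 0)) /\ z = homog n m.
Proof.
case: z => [w|]; last by exists 1, 0; rewrite oner_neq0 /homog eqxx.
by exists w, 1; rewrite oner_neq0 orbT /homog oner_eq0 divr1.
Qed.

Lemma det_lin_neq0 (a b c d x y : C) : a * d - b * c != 0 -> (x != 0) || (y != 0) ->
  (a * x + b * y != 0) || (c * x + d * y != 0).
Proof.
move=> det xy; apply: contraTT xy; rewrite negb_or !negbK => /andP[/eqP e1 /eqP e2].
have ex : (a * d - b * c) * x = d * (a * x + b * y) - b * (c * x + d * y) by ring.
have ey : (a * d - b * c) * y = a * (c * x + d * y) - c * (a * x + b * y) by ring.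
rewrite e1 e2 !mulr0 subr0 in ex ey.
by move/eqP: ex; move/eqP: ey; rewrite !mulf_eq0 (negbTE det) /= => -> ->.
Qed.

Lemma mob_homog a b c d n m : (n != 0) || (m != 0) ->
  mob a b c d (homog n m) = homog (a * n + b * m) (c * n + d * m).
Proof.
move=> nm; have [m0|m0] := eqVneq m 0.
  rewrite m0 eqxx orbF in nm; rewrite m0 /homog eqxx /= !mulr0 !addr0 -/(homog a c).
  by rewrite -(homogZ a c nm) ![n * _]mulrC.
rewrite {1}/homog (negbTE m0) -[mob _ _ _ _ _]/(homog (a * (n / m) + b) (c * (n / m) + d)).
by rewrite -(homogZ _ _ m0); congr homog; field.
Qed.

Lemma mob_comp (a b c d a' b' c' d' : C) : a' * d' - b' * c' != 0 ->
  mob a b c d \o mob a' b' c' d' =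
  mob (a * a' + b * c') (a * b' + b * d') (c * a' + d * c') (c * b' + d * d').
Proof.
move=> det; apply: funext => z /=; have [n [m [nm ->]]] := homog_surj z.
by rewrite !mob_homog ?det_lin_neq0 //; congr homog; ring.
Qed.

Lemma mobZ (l a b c d : C) : l != 0 -> mob (l * a) (l * b) (l * c) (l * d) = mob a b c d.
Proof.
move=> l0; apply: funext => z; have [n [m [nm ->]]] := homog_surj z.
by rewrite !mob_homog // -[RHS](homogZ _ _ l0); congr homog; ring.
Qed.

Lemma mob_scalar (l : C) : l != 0 -> mob l 0 0 l = id.
Proof.
move=> l0; rewrite -[l]mulr1 -[0](mulr0 l) mobZ //.
apply: funext => z; have [n [m [nm ->]]] := homog_surj z.
by rewrite mob_homog //= !mul1r !mul0r addr0 add0r.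
Qed.

Lemma mob_adj_comp (a b c d : C) : a * d - b * c != 0 ->
  mob d (- b) (- c) a \o mob a b c d = id /\ mob a b c d \o mob d (- b) (- c) a = id.
Proof.
move=> det; have det' : d * a - - b * - c != 0 by rewrite mulrNN mulrC.
rewrite !mob_comp //.
split; rewrite -(mob_scalar det); congr mob; ring.
Qed.

Lemma mob_inv (h : P1 C -> P1 C) (a b c d : C) : a * d - b * c != 0 ->
  h \o mob a b c d = id -> h = mob d (- b) (- c) a.
Proof. by move=> det /comp_id_inj; apply; case: (mob_adj_comp det). Qed.

Section Subfield.
Variable F : C -> Prop.
Hypothesis F_sub : is_subfield F.

Lemma subfield0 : F 0. Proof. by case: F_sub. Qed.
Lemma subfield1 : F 1. Proof. by case: F_sub. Qed.
Lemma subfieldB x y : F x -> F y -> F (x - y). Proof. by case: F_sub => _ _ + _ _; apply. Qed.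
Lemma subfieldM x y : F x -> F y -> F (x * y). Proof. by case: F_sub => _ _ _ + _; apply. Qed.

Lemma subfieldN x : F x -> F (- x).
Proof. by rewrite -sub0r; apply/subfieldB/subfield0. Qed.

Lemma subfieldD x y : F x -> F y -> F (x + y).
Proof. by move=> Fx /subfieldN Fy; rewrite -[y]opprK; apply: subfieldB. Qed.

Lemma subfieldV x : F x -> F x^-1.
Proof.
have [->|x0] := eqVneq x 0; first by rewrite invr0.
by case: F_sub => _ _ _ _ + Fx; apply.
Qed.

Lemma subfield_div x y : F x -> F y -> F (x / y).
Proof. by move=> Fx /subfieldV; apply: subfieldM. Qed.

Lemma subfieldX x k : F x -> F (x ^+ k).
Proof.
by move=> Fx; elim: k => [|k ih]; rewrite ?expr0 ?exprS; [exact: subfield1 | exact: subfieldM].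
Qed.

Lemma subfield_homog n m : F n -> F m -> inP1 F (homog n m).
Proof. by move=> Fn Fm; rewrite /homog; case: ifP => //= _; apply: subfield_div. Qed.

Lemma subfield_mob a b c d z :
  F a -> F b -> F c -> F d -> inP1 F z -> inP1 F (mob a b c d z).
Proof.
move=> Fa Fb Fc Fd; case: z => [w|] /= Fz; last exact: subfield_homog.
by apply: subfield_homog; apply: subfieldD => //; apply: subfieldM.
Qed.

Lemma lift_at_comp a b c d a' b' c' d' g h :
  lift_at F a b c d g -> lift_at F a' b' c' d' h ->
  lift_at F (a * a' + b * c') (a * b' + b * d') (c * a' + d * c') (c * b' + d * d') (g \o h).
Proof.
move=> [[Fa Fb Fc Fd det] ->] [[Fa' Fb' Fc' Fd' det'] ->].
split; last exact: mob_comp.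
have FDM x y x' y' : F x -> F y -> F x' -> F y' -> F (x * x' + y * y').
  by move=> Fx Fy Fx' Fy'; apply: subfieldD; apply: subfieldM.
split; try exact: FDM.
suff -> : (a * a' + b * c') * (c * b' + d * d') - (a * b' + b * d') * (c * a' + d * c') =
  (a * d - b * c) * (a' * d' - b' * c') by rewrite mulf_neq0.
by ring.
Qed.

Lemma lift_at_inv a b c d g h :
  lift_at F a b c d g -> h \o g = id -> lift_at F d (- b) (- c) a h.
Proof.
move=> [[Fa Fb Fc Fd det] ->] /(mob_inv det) ->; split=> //.
split; [done | exact: subfieldN | exact: subfieldN | done |].
by rewrite mulrNN mulrC.
Qed.

End Subfield.

End Moebius.

Section NonArchimedean.
Variables (R : realType) (C : fieldType) (abs : C -> R).
Hypothesis habs : is_nonarch_abs abs.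

Lemma abs_ge0 x : 0 <= abs x. Proof. by case: habs. Qed.
Lemma abs_eq0 x : abs x = 0 <-> x = 0. Proof. by case: habs. Qed.
Lemma absM x y : abs (x * y) = abs x * abs y. Proof. by case: habs. Qed.
Lemma abs_ultra x y : abs (x + y) <= Num.max (abs x) (abs y). Proof. by case: habs. Qed.

Lemma abs0 : abs 0 = 0. Proof. exact/abs_eq0. Qed.

Lemma abs_gt0 x : x != 0 -> 0 < abs x.
Proof. by move=> x0; rewrite lt_def abs_ge0 andbT; apply: contra x0 => /eqP/abs_eq0 ->. Qed.

Lemma abs1 : abs 1 = 1.
Proof.
have a10 : abs 1 != 0 by rewrite gt_eqF ?abs_gt0 ?oner_neq0.
by apply: (mulfI a10); rewrite -absM !mulr1.
Qed.

Lemma absN x : abs (- x) = abs x.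
Proof.
have : abs (-1) ^+ 2 == 1 by rewrite expr2 -absM mulrNN mulr1 abs1.
rewrite sqrf_eq1 => /orP[/eqP a1|/eqP a1]; first by rewrite -mulN1r absM a1 mul1r.
by have := abs_ge0 (-1); rewrite a1 ler0N1.
Qed.

Lemma absB x y : abs (x - y) = abs (y - x).
Proof. by rewrite -absN opprB. Qed.

Lemma absV x : abs x^-1 = (abs x)^-1.
Proof.
have [->|x0] := eqVneq x 0; first by rewrite invr0 abs0 invr0.
have ax0 : abs x != 0 by rewrite gt_eqF ?abs_gt0.
by apply: (mulfI ax0); rewrite -absM !mulfV // abs1.
Qed.

Lemma absX x k : abs (x ^+ k) = abs x ^+ k.
Proof. by elim: k => [|k ih]; rewrite ?expr0 ?abs1 // !exprS absM ih. Qed.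

Lemma absD_lt x y e : abs x < e -> abs y < e -> abs (x + y) < e.
Proof. by move=> xe ye; apply: le_lt_trans (abs_ultra x y) _; rewrite gt_max xe ye. Qed.

Lemma absB_lt x y e : abs x < e -> abs y < e -> abs (x - y) < e.
Proof. by move=> xe ye; apply: absD_lt; rewrite ?absN. Qed.

Lemma abs_le_maxB x y : abs y <= Num.max (abs (y - x)) (abs x).
Proof. by have := abs_ultra (y - x) x; rewrite subrK. Qed.

Lemma abs_eq_of_lt x y : abs (x - y) < abs x -> abs y = abs x.
Proof.
move=> xy; apply/eqP; rewrite eq_le; apply/andP; split.
  have := abs_le_maxB x y; rewrite le_max absB => /orP[/le_lt_trans/(_ xy)/ltW|] //.
have := abs_le_maxB y x; rewrite le_max => /orP[/le_lt_trans/(_ xy)|//].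
by rewrite ltxx.
Qed.

Lemma abs_le_max1 x y : abs (y - x) <= 1 -> abs y <= Num.max 1 (abs x).
Proof.
by move=> yx; apply: le_trans (abs_le_maxB x y) _; rewrite ge_max !le_max yx lexx orbT.
Qed.

Lemma max1_ge1 (t : C) : 1 <= Num.max 1 (abs t). Proof. by rewrite le_max lexx. Qed.
Lemma max1_ge (t : C) : abs t <= Num.max 1 (abs t). Proof. by rewrite le_max lexx orbT. Qed.
Lemma max1_gt0 (t : C) : 0 < Num.max 1 (abs t). Proof. exact: lt_le_trans ltr01 (max1_ge1 t). Qed.

Lemma cvgC_cst (a : C) : cvgC abs (fun _ => a) a.
Proof. by move=> e e0; exists 0%N => n _; rewrite subrr abs0. Qed.

Lemma cvgC_subseq (u : nat -> C) a phi : increasing phi -> cvgC abs u a -> cvgC abs (u \o phi) a.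
Proof.
move=> phi_incr ua e e0; have [N uN] := ua e e0; exists N => n le_Nn.
exact/uN/(leq_trans le_Nn)/increasing_ge.
Qed.

Lemma cvgC_add u v a b : cvgC abs u a -> cvgC abs v b -> cvgC abs (fun n => u n + v n) (a + b).
Proof.
move=> ua vb e e0; have [N1 uN] := ua e e0; have [N2 vN] := vb e e0.
exists (maxn N1 N2) => n; rewrite geq_max => /andP[n1 n2].
have -> : u n + v n - (a + b) = (u n - a) + (v n - b) by ring.
exact: absD_lt (uN _ n1) (vN _ n2).
Qed.

Lemma cvgC_opp u a : cvgC abs u a -> cvgC abs (fun n => - u n) (- a).
Proof. by move=> ua e /ua[N uN]; exists N => n /uN; rewrite -opprD absN. Qed.

Lemma cvgC_mul u v a b : cvgC abs u a -> cvgC abs v b -> cvgC abs (fun n => u n * v n) (a * b).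
Proof.
move=> ua vb e e0.
set K := Num.max 1 (abs a) + Num.max 1 (abs b).
have := max1_ge1 a; have := max1_ge1 b; have := max1_ge a => Ka K1b K1a.
have K0 : 0 < K by rewrite /K; lra.
have eK0 : 0 < e / K by rewrite divr_gt0.
have [N1 uN] := ua _ eK0.
have [N2 vN] : exists N, forall n, (N <= n)%N -> abs (v n - b) < Num.min (e / K) 1.
  by apply: vb; rewrite lt_min eK0 ltr01.
exists (maxn N1 N2) => n; rewrite geq_max => /andP[n1 n2].
have /andP[vbK vb1] : (abs (v n - b) < e / K) && (abs (v n - b) < 1) by rewrite -lt_min vN.
have vK : abs (v n) <= K by have := abs_le_max1 (ltW vb1); rewrite /K; lra.
have aK : abs a <= K by rewrite /K; lra.
have -> : u n * v n - a * b = (u n - a) * v n + a * (v n - b) by ring.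
have eKK : e / K * K = e by rewrite divfK ?gt_eqF.
apply: absD_lt; rewrite absM -eKK.
  apply: le_lt_trans (_ : abs (u n - a) * K < _); first by rewrite ler_wpM2l ?abs_ge0.
  by rewrite ltr_pM2r // uN.
apply: le_lt_trans (_ : K * abs (v n - b) < _); first by rewrite ler_wpM2r ?abs_ge0.
by rewrite mulrC ltr_pM2r.
Qed.

Lemma cvgC_inv v b : b != 0 -> cvgC abs v b -> cvgC abs (fun n => (v n)^-1) b^-1.
Proof.
move=> b0 vb e e0; have ab0 := abs_gt0 b0.
have d0 : 0 < Num.min (abs b) (e * (abs b * abs b)) by rewrite lt_min ab0 !mulr_gt0.
have [N vN] := vb _ d0; exists N => n /vN; rewrite lt_min => /andP[vb1 vb2].
have vnb : abs (v n) = abs b by apply: abs_eq_of_lt; rewrite absB.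
have vn0 : v n != 0 by apply/eqP => vn0; move: ab0; rewrite -vnb vn0 abs0 ltxx.
have -> : (v n)^-1 - b^-1 = (b - v n) / (v n * b) by field; apply/andP.
by rewrite absM absV absM vnb absB ltr_pdivrMr // mulr_gt0.
Qed.

Lemma cvgC_uniq u a b : cvgC abs u a -> cvgC abs u b -> a = b.
Proof.
move=> ua ub; apply/eqP; apply: contraT => ab.
have ab0 : 0 < abs (a - b) by rewrite abs_gt0 // subr_eq0.
have [N1 uN1] := ua _ ab0; have [N2 uN2] := ub _ ab0; set n := maxn N1 N2.
have := absB_lt (uN2 n (leq_maxr _ _)) (uN1 n (leq_maxl _ _)).
have -> : u n - b - (u n - a) = a - b by ring.
by rewrite ltxx.
Qed.

Lemma cvgC_abs_eventually u a : a != 0 -> cvgC abs u a ->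
  exists N, forall n, (N <= n)%N -> abs (u n) = abs a.
Proof.
move=> a0 /(_ _ (abs_gt0 a0))[N uN]; exists N => n /uN.
by rewrite absB => /abs_eq_of_lt.
Qed.

Local Notation chord := (chordal abs).
Local Notation cvgP := (cvgP1 abs).

Lemma chordal_refl (z : P1 C) : chord z z = 0.
Proof. by case: z => [a|] //=; rewrite subrr abs0 mul0r. Qed.

Lemma chordal_le_abs s t : chord (Some s) (Some t) <= abs (s - t).
Proof.
rewrite /= ler_pdivrMr ?mulr_gt0 ?max1_gt0 //; apply: ler_peMr; first exact: abs_ge0.
by rewrite -[leLHS]mulr1; apply: ler_pM; rewrite ?ler01 ?max1_ge1.
Qed.

Lemma cvgP1_cst (z : P1 C) : cvgP (fun _ => z) z.
Proof. by move=> e e0; exists 0%N => n _; rewrite chordal_refl. Qed.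

Lemma cvgP1_subseq (u : nat -> P1 C) l phi : increasing phi -> cvgP u l -> cvgP (u \o phi) l.
Proof.
move=> phi_incr ul e e0; have [N uN] := ul e e0; exists N => n le_Nn.
exact/uN/(leq_trans le_Nn)/increasing_ge.
Qed.

Lemma chordal_small_abs t a : chord (Some t) (Some a) < (Num.max 1 (abs a))^-1 ->
  abs t <= Num.max 1 (abs a).
Proof.
rewrite /= leNgt => ta; apply/negP => big_t.
have at_ : abs a < abs t by apply: le_lt_trans (max1_ge a) big_t.
have t1 : 1 < abs t by apply: le_lt_trans (max1_ge1 a) big_t.
have abs_ta : abs (t - a) = abs t by apply: abs_eq_of_lt; rewrite opprB addrC subrK.
move: ta; rewrite abs_ta max_r ?ltW // invfM mulrA divff ?mul1r ?ltxx //.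
by rewrite gt_eqF // (lt_trans ltr01 t1).
Qed.

Lemma abs_le_chordal t a : abs t <= Num.max 1 (abs a) ->
  abs (t - a) <= chord (Some t) (Some a) * (Num.max 1 (abs a) * Num.max 1 (abs a)).
Proof.
move=> ta; have M0 : 0 < Num.max 1 (abs t) * Num.max 1 (abs a) by rewrite mulr_gt0 ?max1_gt0.
rewrite /= -[leLHS](divfK (lt0r_neq0 M0)); apply: ler_wpM2l.
  by rewrite divr_ge0 ?abs_ge0 ?ltW.
by apply: ler_wpM2r; [exact/ltW/max1_gt0 | rewrite ge_max max1_ge1 ta].
Qed.

Lemma cvgP1_Some (u : nat -> P1 C) a : cvgP u (Some a) ->
  exists N, (forall n, (N <= n)%N -> u n != None) /\ cvgC abs (fun n => odflt 0 (u n)) a.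
Proof.
move=> ua; set A := Num.max 1 (abs a); have A0 : 0 < A := max1_gt0 a.
have [N0 uN0] : exists N, forall n, (N <= n)%N -> chord (u n) (Some a) < A^-1.
  by apply: ua; rewrite invr_gt0.
have near n : (N0 <= n)%N -> exists2 t, u n = Some t & abs t <= A.
  by move=> /uN0; case: (u n) => [t /chordal_small_abs|] /=; [exists t|rewrite ltxx].
exists N0; split=> [n /near[t -> _] //|e e0].
have eA0 : 0 < Num.min A^-1 (e / (A * A)) by rewrite lt_min invr_gt0 A0 divr_gt0 ?mulr_gt0.
have [N uN] := ua _ eA0; exists (maxn N0 N) => n; rewrite geq_max => /andP[n0 nN].
have [t ut tA] := near n n0; move: (uN n nN); rewrite ut lt_min => /andP[_ small].
apply: le_lt_trans (abs_le_chordal tA) _.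
by rewrite -ltr_pdivlMr ?mulr_gt0.
Qed.

Lemma cvgP1_uniq (u : nat -> P1 C) l1 l2 : cvgP u l1 -> cvgP u l2 -> l1 = l2.
Proof.
have SomeN a : cvgP u (Some a) -> cvgP u None -> False.
  move=> /cvgP1_Some[N [uN ua]] u_inf; have [N1 uN1] := ua 1 ltr01.
  have [N2 uN2] : exists N, forall n, (N <= n)%N ->
      chord (u n) None < (Num.max 1 (abs a))^-1.
    by apply: u_inf; rewrite invr_gt0 max1_gt0.
  set n := maxn N (maxn N1 N2).
  have [n1 n2] : (N1 <= n)%N /\ (N2 <= n)%N by rewrite !leq_max !leqnn !orbT.
  move: (uN n (leq_maxl _ _)) (uN1 n n1) (uN2 n n2).
  case: (u n) => [t|//] _ /= /ltW/abs_le_max1 ta.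
  by rewrite ltNge lef_pV2 ?posrE ?max1_gt0 // ge_max max1_ge1 ta.
case: l1 => [a|]; case: l2 => [b|] // u1 u2; last by case: (SomeN _ u2 u1).
  have [_ [_ ua]] := cvgP1_Some u1; have [_ [_ ub]] := cvgP1_Some u2.
  by rewrite (cvgC_uniq ua ub).
by case: (SomeN _ u1 u2).
Qed.

Lemma cvgP1_homog (n d : nat -> C) N D : cvgC abs n N -> cvgC abs d D ->
  (N != 0) || (D != 0) -> cvgP (fun k => homog (n k) (d k)) (homog N D).
Proof.
move=> nN dD ND; have [D0|D0] := eqVneq D 0.
  rewrite D0 eqxx orbF in ND; rewrite D0 /homog eqxx.
  have [K nK] := cvgC_abs_eventually ND nN.
  move=> e e0; have eN0 : 0 < e * abs N by rewrite mulr_gt0 ?abs_gt0.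
  have [K2 dK2] := dD _ eN0; exists (maxn K K2) => k; rewrite geq_max => /andP[k1 k2].
  move: (dK2 k k2); rewrite D0 subr0; case: ifP => // /negbT dk0 dk_small /=.
  have nd0 : 0 < abs (n k / d k) by rewrite absM absV (nK k k1) mulr_gt0 ?invr_gt0 ?abs_gt0.
  rewrite -div1r ltr_pdivrMr ?max1_gt0 //.
  apply: (@lt_le_trans _ _ (e * abs (n k / d k))).
    by rewrite absM absV (nK k k1) mulrA ltr_pdivlMr ?abs_gt0 // mul1r.
  by apply: ler_wpM2l; [exact: ltW | exact: max1_ge].
have [K dK] := cvgC_abs_eventually D0 dD.
have nd : cvgC abs (fun k => n k / d k) (N / D) by apply: cvgC_mul => //; apply: cvgC_inv.
move=> e /nd[K2 ndK2]; exists (maxn K K2) => k; rewrite geq_max => /andP[k1 k2].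
have dk0 : d k != 0.
  by apply/eqP => dk0; move: (abs_gt0 D0); rewrite -(dK k k1) dk0 abs0 ltxx.
rewrite /homog (negbTE D0) (negbTE dk0); exact: le_lt_trans (chordal_le_abs _ _) (ndK2 k k2).
Qed.

Lemma cvgP1_mob (a b c d : nat -> C) (a0 b0 c0 d0 : C) z :
  a0 * d0 - b0 * c0 != 0 ->
  cvgC abs a a0 -> cvgC abs b b0 -> cvgC abs c c0 -> cvgC abs d d0 ->
  cvgP (fun n => mob (a n) (b n) (c n) (d n) z) (mob a0 b0 c0 d0 z).
Proof.
move=> det aa0 bb0 cc0 dd0; have [x [y [xy ->]]] := homog_surj z.
under [fun n => _]funext => n do rewrite mob_homog //.
rewrite mob_homog //; apply: cvgP1_homog; rewrite ?det_lin_neq0 //;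
  by apply: cvgC_add; apply: cvgC_mul => //; apply: cvgC_cst.
Qed.

Definition cvg_lift (F : C -> Prop) (g : nat -> P1 C -> P1 C) (g0 : P1 C -> P1 C) :=
  exists (a b c d : nat -> C) (a0 b0 c0 d0 : C),
    [/\ forall n, lift_at F (a n) (b n) (c n) (d n) (g n),
        lift_at F a0 b0 c0 d0 g0 &
        [/\ cvgC abs a a0, cvgC abs b b0, cvgC abs c c0 & cvgC abs d d0]].

Section CvgLift.
Variable F : C -> Prop.
Hypothesis F_sub : is_subfield F.

Lemma cvg_lift_subseq g g0 phi : increasing phi -> cvg_lift F g g0 -> cvg_lift F (g \o phi) g0.
Proof.
move=> phi_incr [a [b [c [d [a0 [b0 [c0 [d0 [lift lift0 [aa0 bb0 cc0 dd0]]]]]]]]]].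
exists (a \o phi), (b \o phi), (c \o phi), (d \o phi), a0, b0, c0, d0.
by split=> [n|//|]; [exact: lift | split; exact: cvgC_subseq].
Qed.

Lemma cvg_lift_comp g g0 h h0 : cvg_lift F g g0 -> cvg_lift F h h0 ->
  cvg_lift F (fun n => g n \o h n) (g0 \o h0).
Proof.
move=> [a [b [c [d [a0 [b0 [c0 [d0 [lift lift0 [aa0 bb0 cc0 dd0]]]]]]]]]].
move=> [a' [b' [c' [d' [a0' [b0' [c0' [d0' [lift' lift0' [aa0' bb0' cc0' dd0']]]]]]]]]].
have cvgDM x y x' y' x0 y0 x0' y0' : cvgC abs x x0 -> cvgC abs y y0 ->
    cvgC abs x' x0' -> cvgC abs y' y0' ->
    cvgC abs (fun n => x n * x' n + y n * y' n) (x0 * x0' + y0 * y0').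
  by move=> *; apply: cvgC_add; apply: cvgC_mul.
do 4 eexists; do 4 eexists; split.
- by move=> n; apply: lift_at_comp (lift n) (lift' n).
- exact: lift_at_comp lift0 lift0'.
- by split; apply: cvgDM.
Qed.

Lemma cvg_lift_inv g g0 h : cvg_lift F g g0 -> (forall n, h n \o g n = id) ->
  exists h0, [/\ h0 \o g0 = id, g0 \o h0 = id & cvg_lift F h h0].
Proof.
move=> [a [b [c [d [a0 [b0 [c0 [d0 [lift lift0 [aa0 bb0 cc0 dd0]]]]]]]]]] hg.
have [[_ _ _ _ det0] g0E] := lift0; subst g0.
have [inv_g0 g0_inv] := mob_adj_comp det0.
exists (mob d0 (- b0) (- c0) a0); split=> //.
exists d, (fun n => - b n), (fun n => - c n), a, d0, (- b0), (- c0), a0.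
split=> [n||]; first exact: lift_at_inv (lift n) (hg n).
  exact: lift_at_inv lift0 inv_g0.
by split=> //; apply: cvgC_opp.
Qed.

Lemma cvg_lift_apply g g0 z : cvg_lift F g g0 -> cvgP (fun n => g n z) (g0 z).
Proof.
move=> [a [b [c [d [a0 [b0 [c0 [d0 [lift [[_ _ _ _ det0] ->] [aa0 bb0 cc0 dd0]]]]]]]]]].
have -> : (fun n => g n z) = fun n => mob (a n) (b n) (c n) (d n) z.
  by apply: funext => n; case: (lift n) => _ ->.
exact: cvgP1_mob.
Qed.

End CvgLift.

End NonArchimedean.

Lemma bernoulli_ineq (R : realDomainType) (h : R) k : 0 <= h -> 1 + k%:R * h <= (1 + h) ^+ k.
Proof.
move=> h0; elim: k => [|k ih]; first by rewrite mul0r addr0 expr0.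
rewrite exprSr; apply: le_trans (_ : (1 + k%:R * h) * (1 + h) <= _); last first.
  by apply: ler_wpM2r => //; lra.
have : 0 <= k%:R * h * h by rewrite !mulr_ge0.
by rewrite -natr1; nra.
Qed.

Lemma exists_expr_lt (R : archiRealFieldType) (t e : R) : 0 <= t < 1 -> 0 < e ->
  exists k, t ^+ k < e.
Proof.
move=> /andP[t0 t1] e0; have [->|t_neq0] := eqVneq t 0; first by exists 1%N; rewrite expr1.
have t_gt0 : 0 < t by rewrite lt_def t_neq0.
set h := t^-1 - 1; have h0 : 0 < h by rewrite subr_gt0 invf_gt1.
have th : t^-1 = 1 + h by rewrite addrC subrK.
have eh0 : 0 <= e^-1 / h by rewrite divr_ge0 ?invr_ge0 ?ltW.
set k := Num.Def.archi_bound (e^-1 / h); exists k.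
rewrite -ltf_pV2 ?posrE ?exprn_gt0 // -exprVn th.
apply: lt_le_trans (bernoulli_ineq k (ltW h0)).
by move: (archi_boundP eh0); rewrite ltr_pdivrMr //; lra.
Qed.

Lemma exists_abs_max (R : realDomainType) (T : eqType) (abs : T -> R) (x : T) (s : seq T) :
  exists2 m, m \in x :: s & all (fun y => abs y <= abs m) (x :: s).
Proof.
elim: s => [|y s [m ms mmax]]; first by exists x; rewrite ?mem_seq1 //= lexx.
have [ym|my] := lerP (abs y) (abs m).
  exists m; first by move: ms; rewrite !inE => /orP[->|->]; rewrite ?orbT.
  by move: mmax => /= /andP[-> ->]; rewrite ym.
exists y; first by rewrite !inE eqxx orbT.
move: mmax => /= /andP[xm /allP sm]; rewrite lexx (le_trans xm (ltW my)) /=.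
by apply/allP => z /sm zm; apply: le_trans zm (ltW my).
Qed.

Section LocalField.
Variables (R : realType) (C : fieldType) (abs : C -> R).
Hypothesis habs : is_nonarch_abs abs.
Variable F : C -> Prop.
Hypothesis hF : embedded_local_field abs F.

Lemma local_field_subfield : is_subfield F. Proof. by case: hF. Qed.


Lemma exists_small e : 0 < e -> exists s, [/\ F s, s != 0 & abs s < e].
Proof.
move=> e0; case: hF => _ [pi [Fpi /andP[pi0 pi1]]] _.
have [k pik] : exists k, abs pi ^+ k < e by apply: exists_expr_lt => //; rewrite ltW.
exists (pi ^+ k); split; first exact: (subfieldX local_field_subfield k Fpi).
  by apply: expf_neq0; apply: contraTneq pi0 => ->; rewrite abs0 ?ltxx.
by rewrite absX.
Qed.

Lemma bounded_subseq_cvg (u : nat -> C) B : 0 < B -> (forall n, F (u n) /\ abs (u n) <= B) ->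
  exists2 phi, increasing phi & exists l, F l /\ cvgC abs (u \o phi) l.
Proof.
move=> B0 uB; case: hF => _ _ [r [r0 compact_r]].
have [s [Fs s0 sB]] := exists_small (divr_gt0 r0 B0).
have suB n : F (s * u n) /\ abs (s * u n) <= r.
  have [Fu uBn] := uB n; split; first exact: (subfieldM local_field_subfield Fs Fu).
  rewrite absM //; apply: le_trans (_ : abs s * B <= _); first by rewrite ler_wpM2l ?abs_ge0.
  by move: sB; rewrite ltr_pdivlMr // => /ltW.
have [phi [phi_incr [l [[Fl _] sul]]]] := compact_r _ suB; exists phi => //.
have Fs' := subfieldV local_field_subfield Fs.
exists (s^-1 * l); split; first exact: (subfieldM local_field_subfield Fs' Fl).
have -> : u \o phi = fun n => s^-1 * (s * u (phi n)) by apply: funext => n /=; rewrite mulKf.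
by apply: cvgC_mul => //; apply: cvgC_cst.
Qed.

Lemma closed_limit (u : nat -> C) l : (forall n, F (u n)) -> cvgC abs u l -> F l.
Proof.
move=> Fu ul; have [N uN] := ul 1 ltr01.
have uB n : F (u (n + N)%N) /\ abs (u (n + N)%N) <= Num.max 1 (abs l).
  by split=> //; apply/abs_le_max1/ltW/uN; rewrite // leq_addl.
have [phi phi_incr [l' [Fl' ul']]] := bounded_subseq_cvg (max1_gt0 abs l) uB.
suff -> : l = l' by [].
apply: (cvgC_uniq habs _ ul'); apply: (cvgC_subseq (phi := fun n => (phi n + N)%N) _ ul).
by move=> n; rewrite ltn_add2r.
Qed.

(* Otherwise the roots of an element pi with 0 < |pi| < 1 would have pairwise distinct
   absolute values accumulating at a non-zero point of the unit ball of F. *)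
Lemma exists_not_in : alg_closedC C -> exists w, ~ F w.
Proof.
move=> closedC; apply: contrapT => all_in.
have Fw w : F w by apply: contrapT => Fw; apply: all_in; exists w.
case: hF => _ [pi [_ /andP[pi0 pi1]]] _.
have [root_pi root_piE] : {w : nat -> C & forall n, w n ^+ n.+1 = pi}.
  apply: (@choice _ _ (fun n w => w ^+ n.+1 = pi)) => n.
  pose P : {poly C} := 'X^(n.+1) - pi%:P.
  have /closedC[x] : (1 < size P)%N by rewrite size_XnsubC.
  by rewrite rootE !hornerE subr_eq0 => /eqP; exists x.
have abs_root n : abs (root_pi n) ^+ n.+1 = abs pi by rewrite -absX ?root_piE.
have root_le1 n : abs (root_pi n) <= 1.
  rewrite leNgt; apply/negP => /(exprn_egt1 n.+1) /=; rewrite abs_root.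
  by move=> /(lt_trans pi1); rewrite ltxx.
have root_ge n : abs pi <= abs (root_pi n).
  rewrite -(abs_root n) exprS ler_piMr ?abs_ge0 //.
  by rewrite exprn_ile1 ?abs_ge0.
have [phi phi_incr [l [_ rl]]] :=
  bounded_subseq_cvg ltr01 (fun n => conj (Fw (root_pi n)) (root_le1 n)).
have l0 : l != 0.
  apply/eqP => l0; have [N rN] := rl _ pi0.
  by move: (rN N (leqnn N)); rewrite l0 subr0 /= ltNge root_ge.
have [K rK] := cvgC_abs_eventually habs l0 rl.
move: (abs_root (phi K)) (abs_root (phi K.+1)); rewrite (rK K) // (rK K.+1) //.
have ij := phi_incr K; set i := phi K in ij *; set j := phi K.+1 in ij *.
rewrite -(subnKC (ltnW ij)) -addSn exprD => li; rewrite li -[RHS]mulr1.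
move=> /(mulfI (lt0r_neq0 pi0))/eqP; rewrite pexpr_eq1 ?subn_gt0 ?abs_ge0 // => /eqP l1.
by move: pi1; rewrite -li l1 expr1n ltxx.
Qed.

Lemma unit_ball_subseq4 (a b c d : nat -> C) :
  (forall n, [/\ F (a n), F (b n), F (c n) & F (d n)]) ->
  (forall n, [/\ abs (a n) <= 1, abs (b n) <= 1, abs (c n) <= 1 & abs (d n) <= 1]) ->
  exists2 phi, increasing phi & exists a0 b0 c0 d0, [/\ F a0, F b0, F c0 & F d0] /\
    [/\ cvgC abs (a \o phi) a0, cvgC abs (b \o phi) b0,
        cvgC abs (c \o phi) c0 & cvgC abs (d \o phi) d0].
Proof.
move=> Fabcd abcd1.
have ball u : (forall n, F (u n)) -> (forall n, abs (u n) <= 1) ->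
    exists2 phi, increasing phi & exists l, F l /\ cvgC abs (u \o phi) l.
  by move=> Fu u1; apply: (bounded_subseq_cvg ltr01) => n; split.
have [Fa Fb Fc Fd] : [/\ forall n, F (a n), forall n, F (b n),
  forall n, F (c n) & forall n, F (d n)] by split=> n; case: (Fabcd n).
have [a1 b1 c1 d1] : [/\ forall n, abs (a n) <= 1, forall n, abs (b n) <= 1,
  forall n, abs (c n) <= 1 & forall n, abs (d n) <= 1] by split=> n; case: (abcd1 n).
have [p1 p1_incr [a0 [Fa0 aa0]]] := ball a Fa a1.
have [p2 p2_incr [b0 [Fb0 bb0]]] := ball (b \o p1) (fun n => Fb _) (fun n => b1 _).
have [p3 p3_incr [c0 [Fc0 cc0]]] := ball (c \o p1 \o p2) (fun n => Fc _) (fun n => c1 _).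
have [p4 p4_incr [d0 [Fd0 dd0]]] := ball (d \o p1 \o p2 \o p3) (fun n => Fd _) (fun n => d1 _).
exists (p1 \o p2 \o p3 \o p4); first by do 3 apply: increasing_comp => //.
exists a0, b0, c0, d0; split=> //; split; last exact: dd0.
- by apply: (cvgC_subseq _ aa0); do 2 apply: increasing_comp => //.
- by apply: (cvgC_subseq _ bb0); apply: increasing_comp.
- exact: (cvgC_subseq _ cc0).
Qed.

Definition normalized_lift_at a b c d (g : P1 C -> P1 C) :=
  [/\ lift_at F a b c d g, [/\ abs a <= 1, abs b <= 1, abs c <= 1 & abs d <= 1]
    & 1 \in [:: a; b; c; d]].

Lemma normalized_lift a b c d g : lift_at F a b c d g ->
  exists a' b' c' d', normalized_lift_at a' b' c' d' g.
Proof.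
move=> [[Fa Fb Fc Fd det] ->].
have [m m_in /and5P[am bm cm dm _]] := exists_abs_max abs a [:: b; c; d].
have m0 : m != 0.
  have abs_le0 x : abs x <= 0 -> x = 0.
    by move=> x0; apply/(abs_eq0 habs)/eqP; rewrite eq_le x0 abs_ge0.
  apply: contraNneq det => m0; move: am bm cm dm; rewrite m0 (abs0 habs).
  by move=> /abs_le0-> /abs_le0-> /abs_le0-> /abs_le0->; rewrite !mulr0 subr0.
have Fm : F m^-1.
  by apply: (subfieldV local_field_subfield); move: m_in; rewrite !inE => /or4P[] /eqP->.
exists (m^-1 * a), (m^-1 * b), (m^-1 * c), (m^-1 * d); split.
- split; last by rewrite mobZ ?invr_eq0.
  split; try exact: (subfieldM local_field_subfield Fm).
  suff -> : m^-1 * a * (m^-1 * d) - m^-1 * b * (m^-1 * c) = m^-2 * (a * d - b * c).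
    by rewrite mulf_neq0 ?invr_eq0 ?expf_neq0.
  by rewrite -exprVn; ring.
- by split; rewrite absM // absV // ler_pdivrMl ?mulr1 ?abs_gt0.
- by move: m_in; rewrite !inE => /or4P[] /eqP mE; rewrite -mE mulVf ?eqxx ?orbT.
Qed.

Lemma not_in_lin_eq0 w x y : ~ F w -> F x -> F y -> x * w + y = 0 -> x = 0 /\ y = 0.
Proof.
move=> Fw Fx Fy xwy; have [x0|x0] := eqVneq x 0; first by move: xwy; rewrite x0 mul0r add0r.
case: Fw; have -> : w = - y / x by rewrite -(subr0 y) -xwy; field.
exact: (subfield_div local_field_subfield (subfieldN local_field_subfield Fy) Fx).
Qed.

Lemma singular_mob_value a b c d w : F a -> F b -> F c -> F d ->
  a * d - b * c = 0 -> c * w + d != 0 -> F ((a * w + b) / (c * w + d)).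
Proof.
move=> Fa Fb Fc Fd det cwd.
have [c0|c0] := eqVneq c 0.
  move: det cwd; rewrite c0 mulr0 subr0 mul0r add0r => /eqP; rewrite mulf_eq0.
  case/orP=> /eqP-> //; rewrite ?eqxx // mul0r add0r => _.
  exact: (subfield_div local_field_subfield).
suff -> : (a * w + b) / (c * w + d) = a / c by exact: (subfield_div local_field_subfield).
by apply/eqP; rewrite eqr_div //; apply/eqP; apply/subr0_eq; rewrite -oppr0 -det; ring.
Qed.

Lemma cvg_normalized_neq0 (a b c d : nat -> C) a0 b0 c0 d0 :
  (forall n, 1 \in [:: a n; b n; c n; d n]) ->
  cvgC abs a a0 -> cvgC abs b b0 -> cvgC abs c c0 -> cvgC abs d d0 ->
  ~ [/\ a0 = 0, b0 = 0, c0 = 0 & d0 = 0].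
Proof.
move=> one aa0 bb0 cc0 dd0 [a00 b00 c00 d00]; subst a0 b0 c0 d0.
have [Na aN] := aa0 1 ltr01; have [Nb bN] := bb0 1 ltr01.
have [Nc cN] := cc0 1 ltr01; have [Nd dN] := dd0 1 ltr01.
set n := maxn (maxn Na Nb) (maxn Nc Nd).
have [[na nb] [nc nd]] : ((Na <= n)%N /\ (Nb <= n)%N) /\ ((Nc <= n)%N /\ (Nd <= n)%N).
  by rewrite !leq_max !leqnn !orbT.
move: (aN n na) (bN n nb) (cN n nc) (dN n nd); rewrite !subr0.
by move: (one n); rewrite !inE => /or4P[] /eqP<-; rewrite abs1 ?ltxx.
Qed.

Lemma cvg_orbit_source_notin (g : nat -> P1 C -> P1 C) z x0 :
  (forall n, is_PGL2 F (g n)) -> ~ F x0 -> cvgP1 abs (fun n => g n z) (Some x0) ->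
  exists2 w, z = Some w & ~ F w.
Proof.
move=> gPGL Fx0 gz; apply: contrapT => z_notin.
have Fz : inP1 F z.
  by case: z {gz} z_notin => [w|] //= z_notin; apply: contrapT => Fw; apply: z_notin; exists w.
have Fgz n : inP1 F (g n z).
  have [a [b [c [d [[Fa Fb Fc Fd _] ->]]]]] := gPGL n.
  exact: (subfield_mob local_field_subfield Fa Fb Fc Fd Fz).
have [N [gN gx0]] := cvgP1_Some habs gz; apply: Fx0.
apply: (closed_limit (u := fun n => odflt 0 (g (n + N)%N z))).
  by move=> n; move: (Fgz (n + N)%N) (gN _ (leq_addl n N)); case: (g _ z).
by apply: (cvgC_subseq (phi := fun n => (n + N)%N) _ gx0) => n; rewrite ltn_add2r.
Qed.

(* Normalise the matrices into the unit ball with one entry equal to 1 and extract a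
   convergent subsequence; the non-zero limit matrix is invertible, because a singular
   one would send w to a point of P^1(F) instead of x0. *)
Lemma PGL2_subseq_cvg (g : nat -> P1 C -> P1 C) z x0 :
  (forall n, is_PGL2 F (g n)) -> ~ F x0 -> cvgP1 abs (fun n => g n z) (Some x0) ->
  exists2 phi, increasing phi & exists g0, cvg_lift abs F (g \o phi) g0.
Proof.
move=> gPGL Fx0 gw; have [w zw Fw] := cvg_orbit_source_notin gPGL Fx0 gw; subst z.
have [A [B [Cc [D ABCD]]]] : exists A B Cc D : nat -> C, forall n,
    normalized_lift_at (A n) (B n) (Cc n) (D n) (g n).
  apply: (@choice4 _ (fun n a b c d => normalized_lift_at a b c d (g n))) => n.
  by have [a [b [c [d /normalized_lift]]]] := gPGL n.
have [phi phi_incr [a0 [b0 [c0 [d0 [[Fa0 Fb0 Fc0 Fd0] [Aa0 Bb0 Cc0 Dd0]]]]]]] :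
    exists2 phi, increasing phi & exists a0 b0 c0 d0, [/\ F a0, F b0, F c0 & F d0] /\
    [/\ cvgC abs (A \o phi) a0, cvgC abs (B \o phi) b0,
        cvgC abs (Cc \o phi) c0 & cvgC abs (D \o phi) d0].
  by apply: unit_ball_subseq4 => n; case: (ABCD n) => [[[? ? ? ? _] _] ? _].
exists phi => //; exists (mob a0 b0 c0 d0).
have one n : 1 \in [:: A (phi n); B (phi n); Cc (phi n); D (phi n)] by case: (ABCD (phi n)).
have lim_neq0 := cvg_normalized_neq0 one Aa0 Bb0 Cc0 Dd0.
have ND : (a0 * w + b0 != 0) || (c0 * w + d0 != 0).
  rewrite -negb_and; apply/negP => /andP[/eqP N0 /eqP D0]; apply: lim_neq0.
  by have [-> ->] := not_in_lin_eq0 Fw Fa0 Fb0 N0; have [-> ->] := not_in_lin_eq0 Fw Fc0 Fd0 D0.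
have gw_lim : cvgP1 abs (fun n => g (phi n) (Some w)) (homog (a0 * w + b0) (c0 * w + d0)).
  have -> : (fun n => g (phi n) (Some w)) =
      fun n => homog (A (phi n) * w + B (phi n)) (Cc (phi n) * w + D (phi n)).
    by apply: funext => n; case: (ABCD (phi n)) => [[_ ->]].
  by apply: cvgP1_homog => //; apply: cvgC_add => //; apply: cvgC_mul => //; exact: cvgC_cst.
move: (cvgP1_uniq habs gw_lim (cvgP1_subseq phi_incr gw)).
rewrite /homog; case: eqP => // /eqP D0 [x0E].
have det0 : a0 * d0 - b0 * c0 != 0.
  by apply/eqP => det0; apply: Fx0; rewrite -x0E; apply: singular_mob_value.
exists (A \o phi), (B \o phi), (Cc \o phi), (D \o phi), a0, b0, c0, d0.
by split=> // n; case: (ABCD (phi n)).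
Qed.

End LocalField.

Section Families.
Variables (C : fieldType) (S : finType).
Implicit Types (T : {set S}) (g h : elt C S).

Lemma prS_in T g q : q \in T -> prS T g q = g q.
Proof. by rewrite /prS => ->. Qed.

Lemma prS_out T g q : q \notin T -> prS T g q = id.
Proof. by rewrite /prS => /negbTE ->. Qed.

Lemma prS_comp T g h : prS T (fun q => g q \o h q) = fun q => prS T g q \o prS T h q.
Proof. by apply: funext => q; rewrite /prS; case: ifP. Qed.

Lemma prS_id T : prS T (fun _ => id) = fun _ => @id (P1 C).
Proof. by apply: funext => q; rewrite /prS; case: ifP. Qed.

End Families.

Section Subgroup.
Variables (C : fieldType) (S : finType) (F : S -> C -> Prop).
Variables (T : {set S}) (G : elt C S -> Prop).
Hypothesis G_sub : is_subgroup F T G.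

Lemma subgroup_PGL2 g q : G g -> q \in T -> is_PGL2 (F q) (g q).
Proof. by case: G_sub => + _ _ _ Gg qT => /(_ g Gg) [+ _]; apply. Qed.

Lemma subgroup_id : G (fun _ => id). Proof. by case: G_sub. Qed.

Lemma subgroup_comp g h : G g -> G h -> G (fun q => g q \o h q).
Proof. by case: G_sub => _ _ + _; apply. Qed.

Lemma subgroup_inv g : G g -> exists h, G h /\ forall q, h q \o g q = id /\ g q \o h q = id.
Proof. by case: G_sub => _ _ _; apply. Qed.

Lemma subgroup_left_inv g k : G g -> (forall q, k q \o g q = id) -> G k.
Proof.
move=> /subgroup_inv[h [Gh hg]] kg; suff -> : k = h by [].
by apply: funext => q; apply: comp_id_inj (kg q) (hg q).2.
Qed.

End Subgroup.

Section Plectic.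
Variables (R : realType) (C : fieldType) (abs : C -> R).
Hypothesis habs : is_nonarch_abs abs.
Variables (S : finType) (F : S -> C -> Prop).
Hypothesis hF : forall q, embedded_local_field abs (F q).
Variable out : S -> C.
Hypothesis out_notin : forall q, ~ F q (out q).

Definition fill_out (T : {set S}) (x : S -> P1 C) : S -> P1 C :=
  fun q => if q \in T then x q else Some (out q).

Lemma plectic_wit_uniq T (G : elt C S -> Prop) L L' :
  plectic_wit abs F T G L -> plectic_wit abs F T G L' ->
  forall q, q \in T -> forall z, L q z <-> L' q z.
Proof.
have sub A B : plectic_wit abs F T G A -> plectic_wit abs F T G B ->
    forall q, q \in T -> forall z, A q z -> B q z.
  move=> [_ A_lim] [B_in B_lim] q qT z Aqz.
  pose x r := if r == q then z else Some (out r).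
  have Ax : exists2 r, r \in T & A r (x r) by exists q; rewrite // /x eqxx.
  have [r rT] := (B_lim x).1 ((A_lim x).2 Ax).
  by rewrite /x; case: eqP => [-> //|_ /(B_in r rT) /out_notin].
by move=> wL wL' q qT z; split; apply: sub.
Qed.

(* Otherwise there are indices a_0 < a_1 < ... with g_(a_(n+1)) h_(a_n) outside V,
   although these converge to g0 g0^-1 = 1, an interior point of V. *)
Lemma recurrent_quotients_in_open T (V : elt C S -> Prop) (g h : nat -> elt C S) g0 :
  open_in_PGL2 abs F T V -> V (fun _ => id) -> cvg_PGL2 abs F T g g0 ->
  (forall n q, h n q \o g n q = id) ->
  exists k, forall N, exists j, (N <= j)%N /\ V (prS T (fun q => g j q \o h k q)).
Proof.
move=> V_open V_id g_lim hg; apply: contrapT => not_rec.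
have [Nf Nf_spec] : {Nf : nat -> nat &
    forall k j, (Nf k <= j)%N -> ~ V (prS T (fun q => g j q \o h k q))}.
  apply: (@choice _ _ (fun k N => forall j, (N <= j)%N -> ~ V (prS T (fun q => g j q \o h k q)))).
  move=> k; apply: contrapT => no_N; apply: not_rec; exists k => N.
  apply: contrapT => none; apply: no_N; exists N => j Nj Vj; apply: none; by exists j.
pose a := fix a n := if n is n'.+1 then maxn (Nf (a n')) (a n').+1 else 0%N.
have a_incr : increasing a by move=> n; rewrite /= leq_maxr.
pose e n := prS T (fun q => g (a n.+1) q \o h (a n) q).
have e_lim : cvg_PGL2 abs F T e (fun _ => id).
  move=> q qT; have F_sub := local_field_subfield (hF q).
  have [h0 [_ g0h0 h_lim]] := cvg_lift_inv habs F_sub (g_lim q qT) (fun n => hg n q).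
  rewrite /e /prS qT -g0h0.
  exact: (cvg_lift_comp habs F_sub (cvg_lift_subseq (fun n => a_incr n.+1) (g_lim q qT))
    (cvg_lift_subseq a_incr h_lim)).
have e_PGL2 n : in_PGL2 F T (e n).
  split=> q qT; last exact: prS_out.
  have [a' [b' [c' [d' [_ [_ [_ [_ [lift _ _]]]]]]]]] := e_lim q qT.
  by exists (a' n), (b' n), (c' n), (d' n).
have [N eV] := V_open _ V_id e e_PGL2 e_lim.
by apply: (Nf_spec (a N)) (eV N (leqnn N)); rewrite /= leq_maxl.
Qed.

Lemma PGL2_subseq_cvg_on (T : {set S}) (g : nat -> elt C S) (y : S -> P1 C) :
  (forall n q, q \in T -> is_PGL2 (F q) (g n q)) ->
  (forall q, q \in T -> cvgP1 abs (fun n => g n q (y q)) (Some (out q))) ->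
  exists2 phi, increasing phi & exists g0, cvg_PGL2 abs F T (g \o phi) g0.
Proof.
move=> gPGL g_lim.
suff [phi phi_incr [g0 g0_lim]] : exists2 phi, increasing phi & exists g0,
    forall q, q \in enum T -> cvg_lift abs (F q) (fun n => g (phi n) q) (g0 q).
  by exists phi => //; exists g0 => q qT; apply: g0_lim; rewrite mem_enum.
have : {subset enum T <= T} by move=> q; rewrite mem_enum.
elim: (enum T) => [_|q l ih lT]; first by exists id => //; exists (fun _ => id).
have qT := lT q (mem_head q l).
have [phi phi_incr [g0 g0_lim]] : exists2 phi, increasing phi & exists g0, forall r, r \in l ->
    cvg_lift abs (F r) (fun n => g (phi n) r) (g0 r).
  by apply: ih => r rl; apply: lT; rewrite inE rl orbT.
have [psi psi_incr [gq gq_lim]] := PGL2_subseq_cvg habs (hF q) (fun n => gPGL (phi n) q qT)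
  (@out_notin q) (cvgP1_subseq phi_incr (g_lim q qT)).
exists (phi \o psi); first exact: increasing_comp.
exists (fun r => if r == q then gq else g0 r) => r; rewrite inE; case: eqP => [-> _ //|_ /= rl].
exact: cvg_lift_subseq psi_incr (g0_lim r rl).
Qed.

Section GammaU.
Variables (Gamma : elt C S -> Prop) (S1 : {set S}) (U : elt C S -> Prop) (L : S -> P1 C -> Prop).
Hypothesis Gamma_sub : is_subgroup F [set: S] Gamma.
Hypothesis L_wit : plectic_wit abs F [set: S] Gamma L.
Hypothesis hU : open_compact_subgroup abs F (~: S1) U.

Lemma U_sub : is_subgroup F (~: S1) U. Proof. by case: hU. Qed.

Lemma L_out q : ~ L q (Some (out q)).
Proof. by move=> /(L_wit.1 q (in_setT q)); apply: out_notin. Qed.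

Lemma limset_fill_out x : limset abs [set: S] Gamma (fill_out S1 x) ->
  exists2 q, q \in S1 & L q (x q).
Proof.
move=> /(L_wit.2 _).1 [q _]; rewrite /fill_out; case: ifP => [qS1|_ /L_out //].
by exists q.
Qed.

(* Compactness of U lets the components outside S1 converge; there they move the
   generic points [out q], so the limit is a limit point of Gamma on all of S. *)
Lemma U_bounded_limit_in_L (eps : nat -> elt C S) y x :
  (forall n, Gamma (eps n)) -> injective eps -> (forall n, U (prS (~: S1) (eps n))) ->
  (forall q, q \in S1 -> cvgP1 abs (fun n => eps n q (y q)) (x q)) ->
  exists2 q, q \in S1 & L q (x q).
Proof.
move=> epsG eps_inj epsU eps_lim; have [_ _ U_compact] := hU.
have [phi [phi_incr [u0 Uu0 u0_lim]]] := U_compact _ epsU.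
have [k0 [_ k0_inv]] := subgroup_inv U_sub Uu0.
apply: limset_fill_out.
exists (fun q => if q \in S1 then y q else k0 q (Some (out q))), (eps \o phi).
split=> [n|i j /eps_inj/(increasing_inj phi_incr) //|q _]; first exact: epsG.
rewrite /fill_out; case: ifP => qS1; first exact: (cvgP1_subseq phi_incr (eps_lim q qS1)).
have qS1' : q \in ~: S1 by rewrite in_setC qS1.
have := cvg_lift_apply habs (k0 q (Some (out q))) (u0_lim q qS1').
by rewrite (comp_id_apply _ (k0_inv q).2) /comp /prS qS1'.
Qed.

Lemma limset_GammaU_sub x : limset abs S1 (GammaU S1 Gamma U) x ->
  exists2 q, q \in S1 & L q (x q).
Proof.
move=> [y [h [hGU h_inj h_lim]]]; have [g gh] := choice hGU.
apply: (U_bounded_limit_in_L (eps := g) (y := y) (x := x)) => [n|i j gij|n|q qS1].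
- by case: (gh n).
- by apply: h_inj; case: (gh i) => _ _ ->; case: (gh j) => _ _ ->; rewrite gij.
- by case: (gh n).
- by have := h_lim q qS1; congr cvgP1; apply: funext => n; case: (gh n) => _ _ ->; rewrite prS_in.
Qed.

(* Otherwise the elements s_0^-1 s_(n+1) would form an infinite subset of Gamma that is
   trivial on S1 and lies in U off S1; it would make [out] a limit point of Gamma. *)
Lemma GammaU_proj_not_constant (s : nat -> elt C S) :
  (forall n, Gamma (s n)) -> (forall n, U (prS (~: S1) (s n))) -> injective s ->
  ~ (forall n, prS S1 (s n) = prS S1 (s 0%N)).
Proof.
move=> sG sU s_inj s_const.
have [iota [iotaG iota_inv]] := subgroup_inv Gamma_sub (sG 0%N).
pose eps n : elt C S := fun q => iota q \o s n.+1 q.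
have s0_eps n : (fun q => s 0%N q \o eps n q) = s n.+1.
  by apply: funext => q; apply: funext => z; apply: comp_id_apply (iota_inv q).2.
have [q qS1] : exists2 q, q \in S1 & L q (Some (out q)); last exact: L_out.
apply: (U_bounded_limit_in_L (eps := eps) (y := fun q => Some (out q))) => [n|i j eij|n|q qS1].
- exact: (subgroup_comp Gamma_sub iotaG (sG _)).
- by apply/succn_inj/s_inj; rewrite -!s0_eps eij.
- rewrite prS_comp; apply: (subgroup_comp U_sub _ (sU _)).
  apply: (subgroup_left_inv U_sub (sU 0%N)) => q.
  by rewrite /prS; case: ifP => _; [apply: (iota_inv q).1 | ].
- have -> : (fun n => eps n q (Some (out q))) = fun _ => Some (out q).
    apply: funext => n; have := congr1 (fun g => g q) (s_const n.+1).
    by rewrite /= !prS_in // /eps /= => ->; apply: comp_id_apply (iota_inv q).1.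
  exact: cvgP1_cst.
Qed.

Lemma GammaU_limit_of_recurrent (gp : nat -> elt C S) k hk y x :
  (forall n, Gamma (gp n)) -> injective gp -> Gamma hk -> (forall q, hk q \o gp k q = id) ->
  (forall N, exists j, (N <= j)%N /\ U (prS (~: S1) (fun q => gp j q \o hk q))) ->
  (forall q, q \in S1 -> cvgP1 abs (fun n => gp n q (y q)) (x q)) ->
  limset abs S1 (GammaU S1 Gamma U) x.
Proof.
move=> gpG gp_inj Ghk hk_gp often_U gp_lim.
pose zeta j : elt C S := fun q => gp j q \o hk q.
have zetaG j : Gamma (zeta j) := subgroup_comp Gamma_sub (gpG j) Ghk.
have zeta_inj : injective zeta.
  have zeta_gp j : (fun q => zeta j q \o gp k q) = gp j.
    by apply: funext => q; apply: funext => z; rewrite /zeta /= (comp_id_apply _ (hk_gp q)).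
  by move=> i j zij; apply: gp_inj; rewrite -[LHS]zeta_gp zij zeta_gp.
have [rho rho_incr rhoU] := increasing_subseq often_U.
have [[psi psi_incr inj]|[psi psi_incr const]] :=
  subseq_injective_or_constant (fun n => prS S1 (zeta (rho n))); last first.
  exfalso; apply: (GammaU_proj_not_constant (s := zeta \o rho \o psi)) => [n|n||n].
  - exact: zetaG.
  - exact: rhoU.
  - by move=> i j /zeta_inj/(increasing_inj rho_incr)/(increasing_inj psi_incr).
  - exact: const.
exists (fun q => gp k q (y q)), (fun n => prS S1 (zeta (rho (psi n)))); split=> [n||q qS1].
- by exists (zeta (rho (psi n))); split; [exact: zetaG | exact: rhoU |].
- exact: inj.
- have := cvgP1_subseq (increasing_comp rho_incr psi_incr) (gp_lim q qS1).
  by congr cvgP1; apply: funext => n; rewrite prS_in // /zeta /= (comp_id_apply _ (hk_gp q)).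
Qed.

Lemma L_sub_limset_GammaU x q0 : q0 \in S1 -> L q0 (x q0) -> limset abs S1 (GammaU S1 Gamma U) x.
Proof.
move=> q0S1 Lx.
have [y [gam [gamG gam_inj gam_lim]]] : limset abs [set: S] Gamma (fill_out S1 x).
  by apply/(L_wit.2 _).2; exists q0; rewrite ?in_setT // /fill_out q0S1.
have [phi phi_incr [g0 g0_lim]] :
    exists2 phi, increasing phi & exists g0, cvg_PGL2 abs F (~: S1) (gam \o phi) g0.
  apply: (PGL2_subseq_cvg_on (y := y)) => [n q _|q].
    exact: (subgroup_PGL2 Gamma_sub (gamG n) (in_setT q)).
  by rewrite in_setC => /negbTE qS1; have := gam_lim q (in_setT q); rewrite /fill_out qS1.
have [hi hi_inv] := choice (fun n => subgroup_inv Gamma_sub (gamG (phi n))).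
have [_ U_open _] := hU.
have [k often_U] := recurrent_quotients_in_open U_open (subgroup_id U_sub) g0_lim
  (fun n q => ((hi_inv n).2 q).1).
apply: (GammaU_limit_of_recurrent (y := y) _ _ (hi_inv k).1 (fun q => ((hi_inv k).2 q).1) often_U).
- by move=> n; apply: gamG.
- exact: (inj_comp gam_inj (increasing_inj phi_incr)).
- move=> q qS1; have := cvgP1_subseq phi_incr (gam_lim q (in_setT q)).
  by rewrite /fill_out qS1.
Qed.

Lemma GammaU_subgroup : is_subgroup F S1 (GammaU S1 Gamma U).
Proof.
split.
- move=> _ [g [Gg _ ->]]; split=> q qS1; last exact: prS_out.
  by rewrite prS_in //; apply: (subgroup_PGL2 Gamma_sub Gg (in_setT q)).
- exists (fun _ => id); rewrite !prS_id; split.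
  + exact: (subgroup_id Gamma_sub).
  + exact: (subgroup_id U_sub).
  + by [].
- move=> _ _ [g [Gg Ug ->]] [h [Gh Uh ->]]; exists (fun q => g q \o h q); split.
  + exact: (subgroup_comp Gamma_sub Gg Gh).
  + by rewrite prS_comp; apply: (subgroup_comp U_sub Ug Uh).
  + by rewrite prS_comp.
- move=> _ [g [Gg Ug ->]]; have [k [Gk kg]] := subgroup_inv Gamma_sub Gg.
  exists (prS S1 k); split; last by move=> q; rewrite /prS; case: ifP => _; [exact: kg|].
  exists k; split=> //; apply: (subgroup_left_inv U_sub Ug) => q.
  by rewrite /prS; case: ifP => _; [exact: (kg q).1|].
Qed.

Lemma GammaU_plectic_wit : plectic_wit abs F S1 (GammaU S1 Gamma U) L.
Proof.
split=> [q _ z|x]; first exact: (L_wit.1 q (in_setT q)).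
split; first exact: limset_GammaU_sub.
by case=> q qS1 Lx; apply: L_sub_limset_GammaU qS1 Lx.
Qed.

End GammaU.
End Plectic.

Theorem proposition2p13 (R : realType) (C : fieldType) (abs : C -> R) (p : nat)
  (hp : prime p) (hC : is_C_field abs p)
  (S : finType) (hS : (0 < #|S|)%N) (F : S -> C -> Prop)
  (hF : forall q, embedded_local_field abs (F q))
  (Gamma : elt C S -> Prop) (hG : plectic abs F [set: S] Gamma)
  (S1 : {set S}) (U : elt C S -> Prop)
  (hU : open_compact_subgroup abs F (~: S1) U) :
  plectic abs F S1 (GammaU S1 Gamma U) /\
  (forall L L' : S -> P1 C -> Prop,
     plectic_wit abs F [set: S] Gamma L ->
     plectic_wit abs F S1 (GammaU S1 Gamma U) L' ->
     forall q, q \in S1 -> forall z, L q z <-> L' q z).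
Proof.
case: hC => habs _ closedC _ _.
have [out out_notin] := choice (fun q => exists_not_in habs (hF q) closedC).
case: hG => Gamma_sub [L0 L0_wit].
have L0_GammaU := GammaU_plectic_wit habs hF out_notin Gamma_sub L0_wit hU.
split; first by split; [exact: (GammaU_subgroup Gamma_sub hU) | exists L0].
move=> L L' L_wit L'_wit q qS1 z.
rewrite (plectic_wit_uniq out_notin L_wit L0_wit (in_setT q)).
exact: (plectic_wit_uniq out_notin L0_GammaU L'_wit qS1 z).
Qed.
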